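(* (1) $Q^{1}_{\mathrm{Mon}}\mathrm{FO}(+,\times)\equiv Q^{\star}_{\mathrm{Mon}}\mathrm{FO}(+,\times)$. (2) $\mathrm{SOM}(Q^{1}_{\mathrm{Mon}},+,\times)\equiv\mathrm{SOM}(Q^{\star}_{\mathrm{Mon}},+,\times)$.
   Context: Strings as structures: a nonempty string $b_0\cdots b_{n-1}$ over the ordered alphabet $(a_1,\dots,a_s)$ is the structure with universe $\{0,\dots,n-1\}$, natural order $<$, and unary predicates $P_{a_i}=\{j:b_j=a_i\}$. FO uses $=$, $<$, these predicates, $\min,\max$, connectives, $\exists,\forall$; SOM adds unary second-order variables and quantifiers. ''$+,\times$'' means the ternary relations $i+j=k$ and $i\cdot j=k$ are additionally built in. Monadic second-order Lindström quantifiers: for a language $L$ over $(a_1,\dots,a_s)$ and distinct unary variables $\overline X=(X_1,\dots,X_k)$, over universe $\{0,\dots,n-1\}$ and an assignment $(A_1,\dots,A_k)$ let $s^i_j=1$ iff $j\in A_i$. For $Q^1_L$ the $2^{nk}$ assignments are ordered lexicographically by the interleaved code $s^1_0\cdots s^k_0s^1_1\cdots s^k_1\cdots s^1_{n-1}\cdots s^k_{n-1}$; for $Q^\star_L$ by the concatenated code $s^1_0\cdots s^1_{n-1}\cdots s^k_0\cdots s^k_{n-1}$. Then $\mathcal A\models Q\overline X[\varphi_1,\dots,\varphi_{s-1}]$ iff the word of length $2^{nk}$ whose $i$-th letter is $a_j$ for the least $j$ with $\varphi_j$ true at the $i$-th assignment (and $a_s$ if none) lies in $L$. A monoid is a finite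 set $M$ with an associative binary operation with identity; for $S\subseteq M$, the word-problem $\mathcal W(S,M)$ is the set of words over alphabet $M$ whose product lies in $S$. $Q^{1}_{\mathrm{Mon}}\mathrm{FO}(+,\times)$ (resp. $Q^{\star}_{\mathrm{Mon}}\mathrm{FO}(+,\times)$) consists of formulas $Q^1_L\overline X[\varphi_1,\dots,\varphi_{s-1}]$ (resp. with $Q^\star_L$), $L$ a monoid word-problem, $\varphi_i$ first-order with built-in $+,\times$. $\mathrm{SOM}(Q^{1}_{\mathrm{Mon}},+,\times)$ (resp. with $\star$) is SOM with built-in $+,\times$ closed under nested application of $Q^1_L$ (resp. $Q^\star_L$) for monoid word-problems $L$. $\mathcal L\equiv\mathcal L'$ means that over every string signature every sentence of either logic has an equivalent sentence of the other. *)

From mathcomp Require Import all_boot.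
Set Implicit Arguments. Unset Strict Implicit. Unset Printing Implicit Defensive.

Inductive term := TVar of nat | TMin | TMax.

Definition teval (n : nat) (fe : nat -> nat) (t : term) : nat :=
  match t with TVar x => fe x | TMin => 0 | TMax => n.-1 end.

(* Ordering of assignments used by a Lindstrom quantifier:
   Interleaved = Q^1, Concatenated = Q^star. *)
Inductive qmode := Interleaved | Concatenated.

(* Formulas over the string signature with alphabet (a_1,...,a_s) = 'I_s,
   with built-in + and x, unary second-order variables (named by nat) and
   monadic second-order Lindstrom quantifiers Q_L Xs [phi_1,...,phi_t]
   where L is a language over an alphabet of t+1 letters 'I_t.+1. *)
Inductive form (s : nat) : Type :=
| FEq of term & term
| FLt of term & term
| FLetter of 'I_s & term
| FSO of nat & term
| FPlus of term & term & term
| FTimes of term & term & term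
| FNot of form s
| FAnd of form s & form s
| FOr of form s & form s
| FEx of nat & form s
| FAll of nat & form s
| FSEx of nat & form s
| FSAll of nat & form s
| FQ (m : qmode) (t : nat) (L : pred (seq 'I_t.+1)) (Xs : seq nat)
     (phi : 'I_t -> form s).

Definition upd (fe : nat -> nat) (x v : nat) : nat -> nat :=
  fun y => if y == x then v else fe y.
Definition supd (se : nat -> nat -> bool) (X : nat) (A : nat -> bool) :=
  fun Y => if Y == X then A else se Y.

(* position (0-based) of the bit s^{i+1}_j in the code of an assignment *)
Definition code_pos (m : qmode) (k n i j : nat) : nat :=
  match m with
  | Interleaved => j * k + i
  | Concatenated => i * n + j
  end.

(* the r-th assignment (0-based, lexicographic order on codes of length n*k)
   to the variables Xs, installed in the second-order environment se *)
Definition q_assign (m : qmode) (n : nat) (Xs : seq nat) (r : nat)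
    (se : nat -> nat -> bool) : nat -> nat -> bool :=
  let k := size Xs in
  fun X j => if X \in Xs then
               (j < n) && odd (r %/ 2 ^ (n * k - (code_pos m k n (index X Xs) j).+1))
             else se X j.

(* universe {0,...,size w - 1}; subsets of it coded by r < 2^n *)
Fixpoint sat (s : nat) (w : seq 'I_s) (fe : nat -> nat) (se : nat -> nat -> bool)
    (f : form s) {struct f} : bool :=
  let n := size w in
  match f with
  | FEq t1 t2 => teval n fe t1 == teval n fe t2
  | FLt t1 t2 => teval n fe t1 < teval n fe t2
  | FLetter a t => nth s (map val w) (teval n fe t) == a
  | FSO X t => se X (teval n fe t)
  | FPlus t1 t2 t3 => teval n fe t1 + teval n fe t2 == teval n fe t3
  | FTimes t1 t2 t3 => teval n fe t1 * teval n fe t2 == teval n fe t3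
  | FNot g => ~~ sat w fe se g
  | FAnd g h => sat w fe se g && sat w fe se h
  | FOr g h => sat w fe se g || sat w fe se h
  | FEx x g => has (fun v => sat w (upd fe x v) se g) (iota 0 n)
  | FAll x g => all (fun v => sat w (upd fe x v) se g) (iota 0 n)
  | FSEx X g => has (fun r => sat w fe (supd se X (fun j => odd (r %/ 2 ^ j))) g)
                    (iota 0 (2 ^ n))
  | FSAll X g => all (fun r => sat w fe (supd se X (fun j => odd (r %/ 2 ^ j))) g)
                    (iota 0 (2 ^ n))
  | FQ m t L Xs phi =>
      L [seq (inord (find (fun i => sat w fe (q_assign m n Xs r se) (phi i))
                          (enum 'I_t)) : 'I_t.+1)
        | r <- iota 0 (2 ^ (n * size Xs))]
  end.

Definition tclosed (bf : seq nat) (t : term) : bool :=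
  if t is TVar x then x \in bf else true.

Fixpoint closedf (s : nat) (bf bs : seq nat) (f : form s) {struct f} : bool :=
  match f with
  | FEq t1 t2 | FLt t1 t2 => tclosed bf t1 && tclosed bf t2
  | FLetter _ t => tclosed bf t
  | FSO X t => (X \in bs) && tclosed bf t
  | FPlus t1 t2 t3 | FTimes t1 t2 t3 =>
      [&& tclosed bf t1, tclosed bf t2 & tclosed bf t3]
  | FNot g => closedf bf bs g
  | FAnd g h | FOr g h => closedf bf bs g && closedf bf bs h
  | FEx x g | FAll x g => closedf (x :: bf) bs g
  | FSEx X g | FSAll X g => closedf bf (X :: bs) g
  | FQ _ t _ Xs phi => all (fun i => closedf bf (Xs ++ bs) (phi i)) (enum 'I_t)
  end.

Definition sentence (s : nat) (f : form s) : bool := closedf [::] [::] f.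

Definition models (s : nat) (w : seq 'I_s) (f : form s) : bool :=
  sat w (fun _ => 0) (fun _ _ => false) f.

(* L over the alphabet 'I_t.+1 is W(S,M) for a finite monoid M whose
   underlying set is the alphabet itself. *)
Definition monoid_wp (t : nat) (L : pred (seq 'I_t.+1)) : Prop :=
  exists (op : 'I_t.+1 -> 'I_t.+1 -> 'I_t.+1) (e : 'I_t.+1) (S : {set 'I_t.+1}),
    [/\ associative op, left_id e op, right_id e op &
        forall u : seq 'I_t.+1, L u = (foldr op e u \in S)].

Fixpoint isFO (s : nat) (f : form s) : bool :=
  match f with
  | FNot g => isFO g
  | FAnd g h | FOr g h => isFO g && isFO h
  | FEx _ g | FAll _ g => isFO g
  | FSEx _ _ | FSAll _ _ | FQ _ _ _ _ _ => false
  | _ => true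
  end.

Definition isQFO (m : qmode) (s : nat) (f : form s) : Prop :=
  match f with
  | FQ m' t L Xs phi =>
      [/\ m' = m, monoid_wp L, uniq Xs, 0 < size Xs & forall i, isFO (phi i)]
  | _ => False
  end.

Fixpoint isSOMQ (m : qmode) (s : nat) (f : form s) {struct f} : Prop :=
  match f with
  | FNot g => isSOMQ m g
  | FAnd g h | FOr g h => isSOMQ m g /\ isSOMQ m h
  | FEx _ g | FAll _ g | FSEx _ g | FSAll _ g => isSOMQ m g
  | FQ m' t L Xs phi =>
      [/\ m' = m, monoid_wp L, uniq Xs, 0 < size Xs & forall i, isSOMQ m (phi i)]
  | _ => True
  end.

Definition equiv_logics (C1 C2 : forall s, form s -> Prop) : Prop :=
  forall s : nat,
    (forall f, C1 s f -> sentence f ->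
       exists g, [/\ C2 s g, sentence g &
                  forall w : seq 'I_s, 0 < size w -> models w f = models w g]) /\
    (forall g, C2 s g -> sentence g ->
       exists f, [/\ C1 s f, sentence f &
                  forall w : seq 'I_s, 0 < size w -> models w f = models w g]).

From mathcomp Require Import all_boot zify.
From Stdlib Require Import FunctionalExtensionality.
Set Implicit Arguments. Unset Strict Implicit. Unset Printing Implicit Defensive.

(* The r-th assignment of a quantifier Q^m over X_0, ..., X_(k-1) gives X_i(j) the
   bit of r at position code_pos m k n i j, and the interleaved and concatenated
   positions both enumerate [0, n k) bijectively. Hence Q^m X [phi] is equivalent to
   Q^m' Y [phi'], where m' is the other mode, the Y are fresh, and each atom X_i(t) of
   phi becomes "Y_i'(j') for the (i', j') whose m'-position is the m-position of
   (i, t)". This equation between positions (t k + i = i' n + j', or i n + t = j' k + i')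
   mentions numbers up to n k, outside the universe, but since k, i, i' are constants
   it is FO(+,x)-definable by adding up t k + i modulo n while counting wraparounds.
   The translation adds no second-order quantifier and keeps the monoid languages,
   so it maps each logic into the other. *)

Arguments FEq {s}. Arguments FLt {s}. Arguments FLetter {s}. Arguments FSO {s}.
Arguments FPlus {s}. Arguments FTimes {s}.

Definition flip_mode (m : qmode) : qmode :=
  if m is Interleaved then Concatenated else Interleaved.

Lemma flip_modeK : involutive flip_mode.
Proof. by case. Qed.

Lemma upd_same fe x v : upd fe x v x = v.
Proof. by rewrite /upd eqxx. Qed.

Lemma upd_other fe x v y : y != x -> upd fe x v y = fe y.
Proof. by rewrite /upd => /negbTE ->. Qed.

Lemma tclosed_mono bf bf' t : {subset bf <= bf'} -> tclosed bf t -> tclosed bf' t.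
Proof. by case: t => //= x /[apply]. Qed.

(* One step of a sum computed modulo [n] with [h] wraparounds: the partial sum
   before adding [d] wrapped either [h] or [h - 1] times. *)
Lemma carry_stepP n h y v d : 0 < n -> y < n -> d <= n ->
  (exists2 x, x < n & ((h * n + x == v) && (x + d == y)) ||
                      [&& 0 < h, (h - 1) * n + x == v & x + d == y + n])
  <-> h * n + y = v + d.
Proof.
move=> n_gt0 y_lt_n d_le_n; split.
- by move=> [x _ /orP[/andP[/eqP ? /eqP ?]|/and3P[? /eqP ? /eqP ?]]]; nia.
- move=> E; have [d_le_y|y_lt_d] := leqP d y.
  + exists (y - d); first lia.
    by apply/orP; left; apply/andP; split; apply/eqP; lia.
  + have h_gt0 : 0 < h by nia.
    exists (y + n - d); first lia.
    by apply/orP; right; apply/and3P; split => //; apply/eqP; nia.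
Qed.

Section ArithmeticFormulas.
Variable s : nat.
Local Notation form := (form s).
Implicit Types (w : seq 'I_s) (fe : nat -> nat) (se : nat -> nat -> bool).

Definition FFalse : form := FLt TMin TMin.

Definition bigOr (l : seq form) : form := foldr (@FOr s) FFalse l.

Lemma sat_bigOr w fe se l : sat w fe se (bigOr l) = has (sat w fe se) l.
Proof. by elim: l => //= f l ->. Qed.

Lemma closed_bigOr bf bs l : all (closedf bf bs) l -> closedf bf bs (bigOr l).
Proof. by elim: l => //= g l IH /andP[-> /IH]. Qed.

Lemma isFO_bigOr l : all (@isFO s) l -> isFO (bigOr l).
Proof. by elim: l => //= g l IH /andP[-> /IH]. Qed.

Definition FSucc (a b v : nat) : form :=
  FAnd (FLt (TVar a) (TVar b))
       (FAll v (FNot (FAnd (FLt (TVar a) (TVar v)) (FLt (TVar v) (TVar b))))).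

Lemma sat_FSucc w fe se a b v : a != v -> b != v -> fe b < size w ->
  sat w fe se (FSucc a b v) = ((fe a).+1 == fe b).
Proof.
move=> av bv b_lt_n /=.
rewrite (eq_all (a2 := fun x => ~~ ((fe a < x) && (x < fe b)))); last first.
  by move=> x; rewrite /= !upd_same !upd_other.
apply/andP/eqP => [[ab /allP noMid]|<-]; last first.
  by split => //; apply/allP => x _ /=; apply/negP => /andP[? ?]; lia.
have : ~~ ((fe a).+1 < fe b).
  apply/negP => lt; have := noMid (fe a).+1; rewrite mem_iota /= lt ltnSn.
  by move=> /(_ ltac:(lia)).
by move=> ?; lia.
Qed.

Lemma closed_FSucc bf bs a b v : a \in bf -> b \in bf -> closedf bf bs (FSucc a b v).
Proof. by move=> ha hb; rewrite /= !inE eqxx ha hb !orbT. Qed.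

Opaque FSucc.

Ltac simpl_upd :=
  rewrite /upd; repeat match goal with |- context [@eq_op _ ?a ?b] =>
    (have -> : (a == b) = false by apply/eqP; lia) ||
    (have -> : (a == b) = true by apply/eqP; lia) end.

(* [y.+1], [y.+2], [y.+3] are scratch variables; with carry the witnesses are
   [e = max - y] and [u = y' + e], so that [y + x = y' + n] reads [u + 1 = x]. *)
Definition FAddStep (plus_x carry : bool) (x y y' : nat) : form :=
  if plus_x then
    if carry then
      FEx y.+1 (FEx y.+2 (FAnd (FPlus (TVar y) (TVar y.+1) TMax)
        (FAnd (FPlus (TVar y') (TVar y.+1) (TVar y.+2)) (FSucc y.+2 x y.+3))))
    else FPlus (TVar y) (TVar x) (TVar y')
  else if carry then FAnd (FEq (TVar y) TMax) (FEq (TVar y') TMin)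
  else FSucc y y' y.+3.

Lemma sat_FAddStep w fe se plus_x carry x y y' : 0 < size w ->
  fe x < size w -> fe y < size w -> fe y' < size w -> x < y -> (y' < y) || (y.+3 < y') ->
  sat w fe se (FAddStep plus_x carry x y y') =
  (fe y + (if plus_x then fe x else 1) == fe y' + carry * size w).
Proof.
move=> n_gt0 x_lt_n y_lt_n y'_lt_n xy y'y; set n := size w.
case: plus_x; case: carry => /=; last 3 first.
- by rewrite mul0n addn0.
- by apply/andP/eqP => [[/eqP ? /eqP ?]|?]; [lia | split; apply/eqP; lia].
- by rewrite sat_FSucc ?mul0n ?addn0 ?addn1 //; apply/eqP; lia.
rewrite (eq_has (a2 := fun e => has (fun u => (fe y + e == n.-1) &&
           ((fe y' + e == u) && (u.+1 == fe x))) (iota 0 n))); last first.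
  move=> e; apply: eq_has => u /=.
  by rewrite sat_FSucc; simpl_upd.
apply/hasP/eqP => [[e _ /hasP[u _ /andP[/eqP ? /andP[/eqP ? /eqP ?]]]]|E]; first lia.
exists (n.-1 - fe y); first by rewrite mem_iota; lia.
apply/hasP; exists (fe x).-1; first by rewrite mem_iota; lia.
by apply/and3P; split; apply/eqP; lia.
Qed.

Lemma closed_FAddStep bf bs plus_x carry x y y' : x \in bf -> y \in bf -> y' \in bf ->
  closedf bf bs (FAddStep plus_x carry x y y').
Proof.
move=> hx hy hy'; case: plus_x; case: carry => /=.
all: by rewrite ?closed_FSucc ?inE ?eqxx ?hx ?hy ?hy' ?orbT.
Qed.

Lemma isFO_FAddStep plus_x carry x y y' : isFO (FAddStep plus_x carry x y y').
Proof. by case: plus_x; case: carry. Qed.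

Opaque FAddStep.

Definition accum (x : nat) (ss : seq bool) : nat := x * count id ss + count negb ss.

(* The summands ([x] for [true], [1] for [false]) are added modulo [n], [h] counting
   the wraparounds; the partial sums live in the variables [base + 4 * i], each
   followed by the three scratch variables of [FAddStep]. *)
Fixpoint FAccum (x base : nat) (ss : seq bool) (h y : nat) : form :=
  match ss with
  | [::] => if h is 0 then FEq (TVar y) TMin else FFalse
  | b :: ss' =>
      let y0 := base + 4 * size ss' in
      FEx y0 (FOr (FAnd (FAccum x base ss' h y0) (FAddStep b false x y0 y))
                  (if h is h'.+1 then FAnd (FAccum x base ss' h' y0) (FAddStep b true x y0 y)
                   else FFalse))
  end.

Lemma sat_FAccum w se x base ss : forall h y fe, 0 < size w -> x < base ->
  (y < base) || (base + 4 * size ss <= y) -> fe x < size w -> fe y < size w ->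
  sat w fe se (FAccum x base ss h y) = (h * size w + fe y == accum (fe x) ss).
Proof.
set n := size w; elim: ss => [|b ss IH] h y fe n_gt0 x_base y_fresh x_lt_n y_lt_n.
  by case: h => [|h] /=; rewrite /accum /= ?muln0 //; apply/esym/negbTE; rewrite -lt0n; lia.
set y0 := base + 4 * size ss; set v := accum (fe x) ss; set d := if b then fe x else 1.
have y_fresh' : (y < y0) || (y0.+3 < y) by move: y_fresh; rewrite /y0 /=; lia.
rewrite /= (eq_in_has (a2 := fun u => ((h * n + u == v) && (u + d == fe y)) ||
     [&& 0 < h, (h - 1) * n + u == v & u + d == fe y + n])); last first.
  move=> u; rewrite mem_iota add0n => u_lt_n.
  have Ex : upd fe y0 u x = fe x by rewrite upd_other //; apply/eqP; lia.
  have Ey : upd fe y0 u y = fe y by rewrite upd_other //; apply/eqP; lia.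
  case: h => [|h] /=.
  - by rewrite IH ?sat_FAddStep ?upd_same ?Ex ?Ey //; lia.
  - by rewrite !IH ?sat_FAddStep ?upd_same ?Ex ?Ey //; lia.
have -> : accum (fe x) (b :: ss) = v + d by rewrite /v /d /accum /=; case: (b); lia.
have d_le_n : d <= n by rewrite /d; case: (b); lia.
apply/hasP/eqP => [[u]|/(carry_stepP h v n_gt0 y_lt_n d_le_n) [u u_lt_n Hu]].
- by rewrite mem_iota => u_lt_n Hu; apply/(carry_stepP h v n_gt0 y_lt_n d_le_n); exists u.
- by exists u; rewrite ?mem_iota.
Qed.

Lemma closed_FAccum bs x base ss : forall h y bf, x \in bf -> y \in bf ->
  closedf bf bs (FAccum x base ss h y).
Proof.
elim: ss => [|b ss IH] h y bf hx hy /=; first by case: h => //=; rewrite hy.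
set y0 := base + 4 * size ss.
have [hx' hy0 hy'] : [/\ x \in y0 :: bf, y0 \in y0 :: bf & y \in y0 :: bf].
  by rewrite !inE eqxx hx hy !orbT.
by rewrite IH ?closed_FAddStep //=; case: h => //= h; rewrite IH ?closed_FAddStep.
Qed.

Lemma isFO_FAccum x base ss : forall h y, isFO (FAccum x base ss h y).
Proof.
elim: ss => [|b ss IH] h y /=; first by case: h.
by rewrite IH isFO_FAddStep; case: h => //= h; rewrite IH isFO_FAddStep.
Qed.

Opaque FAccum.

Lemma accum_nseq x a k : accum x (nseq a false ++ nseq k true) = x * k + a.
Proof. by rewrite /accum !count_cat !count_nseq /=; lia. Qed.

Definition code_match (m : qmode) (k n i j i' j' : nat) : bool :=
  code_pos (flip_mode m) k n i' j' == code_pos m k n i j.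

Definition FCodeMatch (m : qmode) (k z i i' : nat) : form :=
  match m with
  | Interleaved => FAccum z z.+2 (nseq i false ++ nseq k true) i' z.+1
  | Concatenated => FAccum z.+1 z.+2 (nseq i' false ++ nseq k true) i z
  end.

Lemma sat_FCodeMatch w fe se m k z i i' : 0 < size w ->
  fe z < size w -> fe z.+1 < size w ->
  sat w fe se (FCodeMatch m k z i i') = code_match m k (size w) i (fe z) i' (fe z.+1).
Proof.
move=> n_gt0 z_lt_n z1_lt_n; rewrite /code_match.
by case: m; rewrite /= sat_FAccum ?accum_nseq ?(mulnC k) 1?eq_sym //; lia.
Qed.

Lemma closed_FCodeMatch bf bs m k z i i' : z \in bf -> z.+1 \in bf ->
  closedf bf bs (FCodeMatch m k z i i').
Proof. by case: m => ? ?; apply: closed_FAccum. Qed.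

Lemma isFO_FCodeMatch m k z i i' : isFO (FCodeMatch m k z i i').
Proof. by case: m; apply: isFO_FAccum. Qed.

Opaque FCodeMatch.

End ArithmeticFormulas.

Definition term_var (t : term) : nat := if t is TVar x then x else 0.

Lemma teval_upd n fe x v t : term_var t < x -> teval n (upd fe x v) t = teval n fe t.
Proof. by case: t => //= y yx; rewrite upd_other // neq_ltn yx. Qed.

(* [X_i] read off the sets [Y_i' = se (N + i')] *)
Definition transfer_set (m : qmode) (k N n : nat) (se : nat -> nat -> bool) (i : nat) :
    nat -> bool :=
  fun j => (j < n) && has (fun i' => has (fun j' =>
             code_match m k n i j i' j' && se (N + i') j') (iota 0 n)) (iota 0 k).

Lemma transfer_set_ext m k N n se1 se2 i :
  (forall i', i' < k -> se1 (N + i') = se2 (N + i')) ->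
  transfer_set m k N n se1 i = transfer_set m k N n se2 i.
Proof.
move=> E; apply: functional_extensionality => j; rewrite /transfer_set; congr andb.
by apply: eq_in_has => i'; rewrite mem_iota add0n => /E ->.
Qed.

Section TransferFormula.
Variable s : nat.
Local Notation form := (form s).

Definition FTransfer (m : qmode) (k N z i : nat) (t : term) : form :=
  FEx z (FAnd (FEq (TVar z) t)
    (bigOr [seq FEx z.+1 (FAnd (FCodeMatch s m k z i i') (FSO (N + i') (TVar z.+1)))
           | i' <- iota 0 k])).

Lemma sat_FTransfer (w : seq 'I_s) fe se m k N z i t : 0 < size w -> term_var t < z ->
  sat w fe se (FTransfer m k N z i t) = transfer_set m k N (size w) se i (teval (size w) fe t).
Proof.
move=> n_gt0 tz; set n := size w; set j := teval n fe t.
rewrite /= (eq_in_has (a2 := fun v => (v == j) && has (fun i' => has (fun j' =>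
   code_match m k n i v i' j' && se (N + i') j') (iota 0 n)) (iota 0 k))); last first.
  move=> v; rewrite mem_iota add0n => v_lt_n.
  rewrite upd_same teval_upd // sat_bigOr has_map; congr andb; apply: eq_has => i' /=.
  apply: eq_in_has => j'; rewrite mem_iota add0n => j'_lt_n /=.
  have Ez : upd (upd fe z v) z.+1 j' z = v by rewrite upd_other ?upd_same // neq_ltn ltnSn.
  by rewrite sat_FCodeMatch; rewrite ?Ez ?upd_same //; lia.
apply/hasP/andP => [[v]|[j_lt_n Hj]]; last by exists j; rewrite ?mem_iota ?eqxx.
by rewrite mem_iota add0n => v_lt_n /andP[/eqP <-].
Qed.

Lemma closed_FTransfer bf bs m k N z i t : tclosed bf t ->
  (forall i', i' < k -> N + i' \in bs) -> closedf bf bs (FTransfer m k N z i t).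
Proof.
move=> ht hY /=; rewrite inE eqxx (tclosed_mono _ ht); last first.
  by move=> x xb; rewrite inE xb orbT.
apply: closed_bigOr; rewrite all_map; apply/allP => i'; rewrite mem_iota add0n => i'k /=.
by rewrite hY // inE eqxx closed_FCodeMatch // !inE eqxx ?orbT.
Qed.

Lemma isFO_FTransfer m k N z i t : isFO (FTransfer m k N z i t).
Proof.
by rewrite /= isFO_bigOr // all_map; apply/allP => i' _ /=; rewrite isFO_FCodeMatch.
Qed.

Opaque FTransfer.

End TransferFormula.

Section Substitution.
Variable s : nat.
Local Notation form := (form s).

Fixpoint max_fo_var (f : form) : nat :=
  match f with
  | FEq t1 t2 | FLt t1 t2 => maxn (term_var t1) (term_var t2)
  | FLetter _ t | FSO _ t => term_var t
  | FPlus t1 t2 t3 | FTimes t1 t2 t3 => maxn (term_var t1) (maxn (term_var t2) (term_var t3))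
  | FNot g => max_fo_var g
  | FAnd g h | FOr g h => maxn (max_fo_var g) (max_fo_var h)
  | FEx x g | FAll x g => maxn x (max_fo_var g)
  | FSEx _ g | FSAll _ g => max_fo_var g
  | FQ _ t _ _ phi => \max_(i < t) max_fo_var (phi i)
  end.

Fixpoint max_so_var (f : form) : nat :=
  match f with
  | FSO X _ => X
  | FNot g => max_so_var g
  | FAnd g h | FOr g h => maxn (max_so_var g) (max_so_var h)
  | FEx _ g | FAll _ g => max_so_var g
  | FSEx X g | FSAll X g => maxn X (max_so_var g)
  | FQ _ t _ Xs phi => maxn (\max_(X <- Xs) X) (\max_(i < t) max_so_var (phi i))
  | _ => 0
  end.

Lemma eq_sat (w : seq 'I_s) f : forall fe se1 se2,
  (forall X, X <= max_so_var f -> se1 X = se2 X) -> sat w fe se1 f = sat w fe se2 f.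
Proof.
elim: f => //=.
- by move=> X t fe se1 se2 ->.
- by move=> g IH fe se1 se2 E; rewrite (IH _ _ se2).
- move=> g IHg h IHh fe se1 se2 E; rewrite (IHg _ _ se2) ?(IHh _ _ se2) // => X X_le;
  by apply: E; rewrite leq_max X_le ?orbT.
- move=> g IHg h IHh fe se1 se2 E; rewrite (IHg _ _ se2) ?(IHh _ _ se2) // => X X_le;
  by apply: E; rewrite leq_max X_le ?orbT.
- by move=> x g IH fe se1 se2 E; apply: eq_has => v; rewrite (IH _ _ se2).
- by move=> x g IH fe se1 se2 E; apply: eq_all => v; rewrite (IH _ _ se2).
- move=> X g IH fe se1 se2 E; apply: eq_has => r; apply: IH => Y Y_le; rewrite /supd.
  by case: eqP => // _; apply: E; rewrite leq_max Y_le orbT.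
- move=> X g IH fe se1 se2 E; apply: eq_all => r; apply: IH => Y Y_le; rewrite /supd.
  by case: eqP => // _; apply: E; rewrite leq_max Y_le orbT.
- move=> m t L Zs phi IH fe se1 se2 E.
  congr (L _); apply: eq_map => r; congr inord; apply: eq_find => i.
  apply: IH => Y Y_le; apply: functional_extensionality => j; rewrite /q_assign.
  case: ifP => // _; rewrite E // leq_max; apply/orP; right.
  by apply: leq_trans Y_le _; exact: leq_bigmax.
Qed.

Variables (Xs : seq nat) (m : qmode) (N z : nat).
Local Notation k := (size Xs).

(* [act] lists the variables of [Xs] not rebound so far. *)
Fixpoint subst_transfer (act : seq nat) (f : form) : form :=
  match f with
  | FSO X t => if X \in act then FTransfer s m k N z (index X Xs) t else FSO X t
  | FNot g => FNot (subst_transfer act g)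
  | FAnd g h => FAnd (subst_transfer act g) (subst_transfer act h)
  | FOr g h => FOr (subst_transfer act g) (subst_transfer act h)
  | FEx x g => FEx x (subst_transfer act g)
  | FAll x g => FAll x (subst_transfer act g)
  | FSEx X g => FSEx X (subst_transfer [seq Y <- act | Y != X] g)
  | FSAll X g => FSAll X (subst_transfer [seq Y <- act | Y != X] g)
  | FQ m' t L Zs phi => FQ m' L Zs (fun i => subst_transfer [seq Y <- act | Y \notin Zs] (phi i))
  | f => f
  end.

Definition transfer_env (n : nat) (act : seq nat) (se : nat -> nat -> bool) :
    nat -> nat -> bool :=
  fun X => if X \in act then transfer_set m k N n se (index X Xs) else se X.

Lemma sat_subst_transfer (w : seq 'I_s) f : forall act fe se, 0 < size w ->
  max_fo_var f < z -> max_so_var f < N ->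
  sat w fe se (subst_transfer act f) = sat w fe (transfer_env (size w) act se) f.
Proof.
elim: f => //=.
- move=> X t act fe se n_gt0 t_lt_z _; rewrite /transfer_env.
  by case: ifP => // _; rewrite sat_FTransfer.
- by move=> g IH act fe se n_gt0 h1 h2; rewrite IH.
- move=> g IHg h IHh act fe se n_gt0; rewrite !gtn_max => /andP[? ?] /andP[? ?].
  by rewrite IHg ?IHh.
- move=> g IHg h IHh act fe se n_gt0; rewrite !gtn_max => /andP[? ?] /andP[? ?].
  by rewrite IHg ?IHh.
- move=> x g IH act fe se n_gt0; rewrite !gtn_max => /andP[? ?] ?.
  by apply: eq_has => v; rewrite IH.
- move=> x g IH act fe se n_gt0; rewrite !gtn_max => /andP[? ?] ?.
  by apply: eq_all => v; rewrite IH.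
- move=> X g IH act fe se n_gt0 ?; rewrite !gtn_max => /andP[? ?].
  apply: eq_has => r; rewrite IH //; congr sat.
  apply: functional_extensionality => Y; rewrite /transfer_env /supd mem_filter.
  case: eqP => [->|_] //=; case: ifP => // _; apply: transfer_set_ext => i' _.
  by rewrite ifN //; apply/eqP; lia.
- move=> X g IH act fe se n_gt0 ?; rewrite !gtn_max => /andP[? ?].
  apply: eq_all => r; rewrite IH //; congr sat.
  apply: functional_extensionality => Y; rewrite /transfer_env /supd mem_filter.
  case: eqP => [->|_] //=; case: ifP => // _; apply: transfer_set_ext => i' _.
  by rewrite ifN //; apply/eqP; lia.
- move=> m' t L Zs phi IH act fe se n_gt0 hF; rewrite gtn_max => /andP[hZ hS].
  congr (L _); apply: eq_map => r; congr inord; apply: eq_find => i.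
  rewrite IH //; last first.
  + by apply: leq_ltn_trans hS; apply: leq_bigmax.
  + by apply: leq_ltn_trans hF; apply: leq_bigmax.
  congr sat; apply: functional_extensionality => Y; apply: functional_extensionality => j.
  rewrite /transfer_env /q_assign mem_filter.
  case: (boolP (Y \in Zs)) => YZ //=; case: ifP => // _.
  rewrite (@transfer_set_ext _ _ _ _ _ se) // => i' _.
  apply: functional_extensionality => j'; rewrite ifN //; apply/negP => NZ.
  have : N + i' <= \max_(X <- Zs) X := @leq_bigmax_seq _ Zs predT id _ NZ isT.
  lia.
Qed.

End Substitution.

Lemma code_pos_flip_exists m k n i j : i < k -> j < n ->
  exists i' j', [/\ i' < k, j' < n & code_pos (flip_mode m) k n i' j' = code_pos m k n i j].
Proof.
move=> i_lt_k j_lt_n; case: m => /=.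
- exists ((j * k + i) %/ n), ((j * k + i) %% n); split; last by rewrite -divn_eq.
  + by rewrite ltn_divLR; nia.
  + by rewrite ltn_pmod //; lia.
- exists ((i * n + j) %% k), ((i * n + j) %/ k); split; last by rewrite -divn_eq.
  + by rewrite ltn_pmod //; lia.
  + by rewrite ltn_divLR; nia.
Qed.

(* The right-hand side is [X_i] under the [r]-th assignment in mode [m]. *)
Lemma transfer_set_assign m k N n r se i : i < k ->
  transfer_set m k N n (q_assign (flip_mode m) n (iota N k) r se) i =
  fun j => (j < n) && odd (r %/ 2 ^ (n * k - (code_pos m k n i j).+1)).
Proof.
move=> i_lt_k; apply: functional_extensionality => j; rewrite /transfer_set.
case: (ltnP j n) => //= j_lt_n.
have assignY i' j' : i' < k -> q_assign (flip_mode m) n (iota N k) r se (N + i') j' =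
    (j' < n) && odd (r %/ 2 ^ (n * k - (code_pos (flip_mode m) k n i' j').+1)).
  move=> i'_lt_k; rewrite /q_assign mem_iota leq_addr ltn_add2l i'_lt_k size_iota.
  by rewrite -{1}(nth_iota 0 N i'_lt_k) index_uniq ?size_iota ?iota_uniq.
apply/hasP/idP => [[i']|bit_r].
- rewrite mem_iota add0n => i'_lt_k /hasP[j' _ /andP[/eqP E]].
  by rewrite assignY // E => /andP[_ ->].
- have [i' [j' [i'_lt_k j'_lt_n E]]] := code_pos_flip_exists m i_lt_k j_lt_n.
  exists i'; first by rewrite mem_iota.
  by apply/hasP; exists j'; rewrite ?mem_iota // /code_match E eqxx assignY // j'_lt_n E.
Qed.

Section Translation.
Variable s : nat.
Local Notation form := (form s).

(* The new variables [Y_i' = N + i'] are fresh, and so are the first-order variables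
   from [z] on, used by the transfer formulas. *)
Definition flip_quant (m : qmode) t (L : pred (seq 'I_t.+1)) (Xs : seq nat)
    (psi : 'I_t -> form) : form :=
  let z := (\max_(i < t) max_fo_var (psi i)).+1 in
  let N := (\max_(i < t) max_so_var (psi i)).+1 in
  FQ (flip_mode m) L (iota N (size Xs)) (fun i => subst_transfer Xs m N z Xs (psi i)).

Fixpoint translate (f : form) : form :=
  match f with
  | FNot g => FNot (translate g)
  | FAnd g h => FAnd (translate g) (translate h)
  | FOr g h => FOr (translate g) (translate h)
  | FEx x g => FEx x (translate g)
  | FAll x g => FAll x (translate g)
  | FSEx X g => FSEx X (translate g)
  | FSAll X g => FSAll X (translate g)
  | FQ m t L Xs phi => flip_quant m L Xs (fun i => translate (phi i))
  | f => f
  end.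

Lemma sat_flip_quant (w : seq 'I_s) fe se m t L Xs (psi phi : 'I_t -> form) :
  0 < size w -> (forall i fe se, sat w fe se (psi i) = sat w fe se (phi i)) ->
  sat w fe se (flip_quant m L Xs psi) = sat w fe se (FQ m L Xs phi).
Proof.
move=> n_gt0 psi_phi; rewrite /= size_iota.
set z := (\max_(i < t) max_fo_var (psi i)).+1.
set N := (\max_(i < t) max_so_var (psi i)).+1.
congr (L _); apply: eq_map => r; congr inord; apply: eq_find => i.
rewrite sat_subst_transfer ?ltnS ?leq_bigmax // -psi_phi.
apply: eq_sat => X X_le; apply: functional_extensionality => j.
rewrite /transfer_env /q_assign; case: ifP => XXs.
- by rewrite transfer_set_assign ?index_mem.
- rewrite mem_iota ifN //; apply/negP => /andP[N_le _].
  have : X < N by rewrite ltnS; apply: leq_trans X_le _; apply: leq_bigmax.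
  by rewrite ltnNge N_le.
Qed.

Lemma sat_translate (w : seq 'I_s) f fe se : 0 < size w ->
  sat w fe se (translate f) = sat w fe se f.
Proof.
move=> n_gt0; elim: f fe se => //=.
- by move=> g IH fe se; rewrite IH.
- by move=> g IHg h IHh fe se; rewrite IHg IHh.
- by move=> g IHg h IHh fe se; rewrite IHg IHh.
- by move=> x g IH fe se; apply: eq_has => v; rewrite IH.
- by move=> x g IH fe se; apply: eq_all => v; rewrite IH.
- by move=> X g IH fe se; apply: eq_has => v; rewrite IH.
- by move=> X g IH fe se; apply: eq_all => v; rewrite IH.
- by move=> m t L Xs phi IH fe se; apply: sat_flip_quant.
Qed.

End Translation.

Section Closedness.
Variable s : nat.
Local Notation form := (form s).

Lemma closed_subst_transfer Xs m N z (f : form) : forall act bf bs0 bs,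
  closedf bf bs0 f -> (forall X, X \in bs0 -> (X \in act) || (X \in bs)) ->
  (forall i', i' < size Xs -> N + i' \in bs) ->
  closedf bf bs (subst_transfer Xs m N z act f).
Proof.
elim: f => /=; try by move=> *.
- move=> X t act bf bs0 bs /andP[Xb tb] Hbs0 HY; case: ifP => XA.
  + exact: closed_FTransfer.
  + by move: (Hbs0 X Xb); rewrite XA /= => ->.
- by move=> g IH act bf bs0 bs C Hbs0 HY; apply: (IH _ _ bs0).
- by move=> g IHg h IHh act bf bs0 bs /andP[C1 C2] Hbs0 HY; rewrite (IHg _ _ bs0) // (IHh _ _ bs0).
- by move=> g IHg h IHh act bf bs0 bs /andP[C1 C2] Hbs0 HY; rewrite (IHg _ _ bs0) // (IHh _ _ bs0).
- by move=> x g IH act bf bs0 bs C Hbs0 HY; apply: (IH _ _ bs0).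
- by move=> x g IH act bf bs0 bs C Hbs0 HY; apply: (IH _ _ bs0).
- move=> X g IH act bf bs0 bs C Hbs0 HY; apply: (IH _ _ (X :: bs0) _ C).
    move=> Y; rewrite !inE mem_filter; case: eqP => //= _ /Hbs0.
    by case/orP => ->; rewrite ?orbT.
  by move=> i' /HY NY; rewrite inE NY orbT.
- move=> X g IH act bf bs0 bs C Hbs0 HY; apply: (IH _ _ (X :: bs0) _ C).
    move=> Y; rewrite !inE mem_filter; case: eqP => //= _ /Hbs0.
    by case/orP => ->; rewrite ?orbT.
  by move=> i' /HY NY; rewrite inE NY orbT.
- move=> m' t L Zs phi IH act bf bs0 bs /allP C Hbs0 HY; apply/allP => i _.
  apply: (IH i _ _ (Zs ++ bs0)); first exact: C (mem_enum _ i).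
    move=> Y; rewrite !mem_cat mem_filter; case: (boolP (Y \in Zs)) => //= _ /Hbs0.
    by case/orP => ->; rewrite ?orbT.
  by move=> i' /HY NY; rewrite mem_cat NY orbT.
Qed.

Lemma closed_translate (f : form) : forall bf bs, closedf bf bs f -> closedf bf bs (translate f).
Proof.
elim: f => /=; try by move=> *.
- by move=> g IH; exact: IH.
- by move=> g IHg h IHh bf bs /andP[C1 C2]; rewrite IHg // IHh.
- by move=> g IHg h IHh bf bs /andP[C1 C2]; rewrite IHg // IHh.
- by move=> x g IH bf bs /IH.
- by move=> x g IH bf bs /IH.
- by move=> X g IH bf bs /IH.
- by move=> X g IH bf bs /IH.
- move=> m t L Xs phi IH bf bs /allP C; apply/allP => i _.
  apply: (@closed_subst_transfer _ _ _ _ _ _ _ (Xs ++ bs)).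
  + by apply: IH; exact: C (mem_enum _ i).
  + by move=> X; rewrite !mem_cat => /orP[->|->]; rewrite ?orbT.
  + by move=> i' i'_lt_k; rewrite mem_cat mem_iota leq_addr ltn_add2l i'_lt_k.
Qed.

End Closedness.

Section Fragments.
Variable s : nat.
Local Notation form := (form s).

Lemma isFO_subst_transfer Xs m N z (f : form) act :
  isFO f -> isFO (subst_transfer Xs m N z act f).
Proof.
elim: f act => //=.
- by move=> X t act _; case: ifP => // _; apply: isFO_FTransfer.
all: by move=> g IHg h IHh act /andP[? ?]; rewrite IHg ?IHh.
Qed.

Lemma isFO_translate (f : form) : isFO f -> isFO (translate f).
Proof.
elim: f => //=.
- by move=> g IHg h IHh /andP[/IHg -> /IHh ->].
- by move=> g IHg h IHh /andP[/IHg -> /IHh ->].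
Qed.

Lemma isFO_isSOMQ m (f : form) : isFO f -> isSOMQ m f.
Proof.
elim: f => //=.
- by move=> g IHg h IHh /andP[/IHg ? /IHh ?].
- by move=> g IHg h IHh /andP[/IHg ? /IHh ?].
Qed.

Lemma isSOMQ_subst_transfer m Xs m0 N z (f : form) act :
  isSOMQ m f -> isSOMQ m (subst_transfer Xs m0 N z act f).
Proof.
elim: f act => //=.
- by move=> X t act _; case: ifP => // _; apply/isFO_isSOMQ/isFO_FTransfer.
- by move=> g IHg h IHh act [? ?]; split; [apply: IHg | apply: IHh].
- by move=> g IHg h IHh act [? ?]; split; [apply: IHg | apply: IHh].
- by move=> X g IH act; apply: IH.
- by move=> X g IH act; apply: IH.
- by move=> m' t L Zs phi IH act [-> ? ? ? ?]; split => // i; apply: IH.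
Qed.

Lemma isSOMQ_translate m (f : form) : isSOMQ m f -> isSOMQ (flip_mode m) (translate f).
Proof.
elim: f => //=.
- by move=> g IHg h IHh [/IHg ? /IHh ?].
- by move=> g IHg h IHh [/IHg ? /IHh ?].
- move=> m0 t L Xs phi IH [-> L_wp _ k_gt0 phi_m]; split; rewrite ?size_iota ?iota_uniq //.
  by move=> i; apply/isSOMQ_subst_transfer/IH.
Qed.

Lemma isQFO_translate m (f : form) : isQFO m f -> isQFO (flip_mode m) (translate f).
Proof.
case: f => //= m0 t L Xs phi [-> L_wp _ k_gt0 phi_FO]; split; rewrite ?size_iota ?iota_uniq //.
by move=> i; apply/isFO_subst_transfer/isFO_translate.
Qed.

End Fragments.

Lemma models_translate s (w : seq 'I_s) (f : form s) : 0 < size w ->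
  models w (translate f) = models w f.
Proof. exact: sat_translate. Qed.

Lemma sentence_translate s (f : form s) : sentence f -> sentence (translate f).
Proof. exact: closed_translate. Qed.

Lemma equiv_logics_flip (C : qmode -> forall s, form s -> Prop) m :
  (forall s m (f : form s), C m s f -> C (flip_mode m) s (translate f)) ->
  equiv_logics (C m) (C (flip_mode m)).
Proof.
move=> C_translate s; split=> [f Cf f_sentence | g Cg g_sentence].
- exists (translate f); split; [exact: C_translate | exact: sentence_translate |].
  by move=> w n_gt0; rewrite models_translate.
- exists (translate g); split; [| exact: sentence_translate |].
  + by rewrite -[m]flip_modeK; apply: C_translate.
  + by move=> w n_gt0; rewrite models_translate.
Qed.

Theorem theorem4p2 :
  equiv_logics (isQFO Interleaved) (isQFO Concatenated) /\
  equiv_logics (isSOMQ Interleaved) (isSOMQ Concatenated).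
Proof.
split.
- exact: (equiv_logics_flip Interleaved isQFO_translate).
- exact: (equiv_logics_flip Interleaved isSOMQ_translate).
Qed.
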